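(* The unique double bialgebra morphism from $\mathcal{T}op$ to $\mathcal{C}omp$ is given by the following: for any quasi-poset $T$, \[\phi(T)=\sum_{f\in L(T)} (f^{-1}(1),\ldots,f^{-1}(\max(f))).\]
   Context: $\mathcal{T}op[A]$ is the vector space generated by finite topologies on $A$, identified with quasi-posets $(A,\le_T)$ (open sets are upward-closed sets); $a\sim_T b$ means $a\le_T b$ and $b\le_T a$. It is a double twisted bialgebra: product disjoint union; $\Delta_{A,B}(T)=T_{\mid A}\otimes T_{\mid B}$ if $B$ is open in $T$, $0$ otherwise; $\delta_A(T)=\sum_{\sim\in\mathrm{CE}(T)}T/\sim\otimes T|\sim$ (sum over $T$-compatible equivalences: classes $T$-connected and $\sim_{T/\sim}=\sim$, where $T|\sim$ keeps the relations $x\le_T y$ with $x\sim y$ and $T/\sim$ is the transitive closure of $\le_T$ and $\sim$), whose counit is $\varepsilon'_{\mathcal{T}op}(T)=1$ if $\le_T$ is an equivalence and $0$ otherwise. The morphism $\phi$ is equivalently the unique twisted bialgebra morphism $\mathcal{T}op\to\mathcal{C}omp$ with $\varepsilon'\circ\phi=\varepsilon'_{\mathcal{T}op}$. $\mathcal{C}omp[A]$ has basis the set compositions $(A_1,\ldots,A_k)$ of $A$, with quasi-shuffle product $\uplus$, deconcatenation coproduct $\Delta$, a second coproduct $\delta$, and $\varepsilon'(A_1,\ldots,A_k)=\delta_{k,1}$. $L(T)$ is the set of surjections $f:A\to\{1,\ldots,\max(f)\}$ such that $a\le_T b$ implies $f(a)\le f(b)$, and $a\le_T b$ with $f(a)=f(b)$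 implies $a\sim_T b$. *)

From mathcomp Require Import all_boot all_order all_algebra.
From mathcomp Require Import perm.
Set Implicit Arguments. Unset Strict Implicit. Unset Printing Implicit Defensive.
Import GRing.Theory.
Local Open Scope ring_scope.

(* A finite topology (quasi-poset) on A is a relation T : {set X * X}      *)
(* contained in A x A, reflexive on A and transitive; (a,b) \in T means    *)
(* a <=_T b.                                                               *)
(* An element of Comp[A] is a coefficient function on set compositions    *)
(* (sequences of nonempty pairwise disjoint blocks covering A).            *)
(* Linear maps Top[A] -> Comp[A] are given by their values on the basis.   *)

Section TopComp.
Variables (X : finType) (K : fieldType).

Definition is_top (A : {set X}) (T : {set X * X}) : bool :=
  [&& T \subset setX A A,
      [forall a in A, (a, a) \in T] &
      [forall a, forall b, forall c,
         ((a, b) \in T) && ((b, c) \in T) ==> ((a, c) \in T)]].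

Definition restr (B : {set X}) (T : {set X * X}) : {set X * X} :=
  T :&: setX B B.

Definition open_in (B : {set X}) (T : {set X * X}) : bool :=
  [forall a, forall b, ((a, b) \in T) && (a \in B) ==> (b \in B)].

Definition is_equiv (T : {set X * X}) : bool :=
  [forall a, forall b, ((a, b) \in T) ==> ((b, a) \in T)].

Definition relabel (s : {perm X}) (T : {set X * X}) : {set X * X} :=
  [set (s p.1, s p.2) | p in T].

Definition is_comp (A : {set X}) (C : seq {set X}) : bool :=
  [&& set0 \notin C,
      pairwise (fun B1 B2 : {set X} => [disjoint B1 & B2]) C &
      \bigcup_(B <- C) B == A].

(* Functions A -> {1,...,max f} are encoded as f : X -> 'I_(#|X|.+1) with *)
(* f x = 0 outside A (the values outside A are irrelevant).                *)
Definition sfun := {ffun X -> 'I_#|X|.+1}.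

Definition fmax (A : {set X}) (f : sfun) : nat := \max_(a in A) (f a : nat).

Definition is_surj (A : {set X}) (f : sfun) : bool :=
  [&& [forall x, (x \notin A) ==> ((f x : nat) == 0%N)],
      [forall a in A, (1 <= f a)%N] &
      [forall i : 'I_#|X|.+1, (1 <= i <= fmax A f)%N ==>
                                [exists a in A, (f a : nat) == i]]].

Definition inL (A : {set X}) (T : {set X * X}) (f : sfun) : bool :=
  [&& is_surj A f,
      [forall a, forall b, ((a, b) \in T) ==> (f a <= f b)%N] &
      [forall a, forall b, ((a, b) \in T) && ((f a : nat) == f b)
                             ==> ((b, a) \in T)]].

Definition blocks (A : {set X}) (f : sfun) : seq {set X} :=
  [seq [set a in A | (f a : nat) == i] | i <- iota 1 (fmax A f)].

Definition comps (A : {set X}) : seq (seq {set X}) :=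
  undup [seq blocks A f | f <- enum [pred f : sfun | is_surj A f]].

Fixpoint qsh (s : seq {set X}) : seq {set X} -> seq (seq {set X}) :=
  match s with
  | [::] => fun t => [:: t]
  | a :: s' =>
      fix qsh_t (t : seq {set X}) : seq (seq {set X}) :=
        match t with
        | [::] => [:: s]
        | b :: t' =>
            [seq a :: u | u <- qsh s' t] ++
            [seq b :: u | u <- qsh_t t'] ++
            [seq (a :|: b) :: u | u <- qsh s' t']
        end
  end.

Definition cprod (A B : {set X}) (c1 c2 : seq {set X} -> K)
    : seq {set X} -> K :=
  fun C => \sum_(C1 <- comps A) \sum_(C2 <- comps B)
             c1 C1 * c2 C2 * (count_mem C (qsh C1 C2))%:R.

(* epsilon' on Comp[A]: (A_1,...,A_k) |-> delta_{k,1} (and 1 on the empty *)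
(* composition, the unit of Comp[emptyset])                               *)
Definition eps'_comp (A : {set X}) (c : seq {set X} -> K) : K :=
  \sum_(C <- comps A) c C * (size C <= 1)%N%:R.

Definition eps'_top (T : {set X * X}) : K := (is_equiv T)%:R.

Definition tb_morphism (psi : {set X} -> {set X * X} -> seq {set X} -> K)
    : Prop :=
  [/\ (* psi_A maps into Comp[A] *)
      (forall (A : {set X}) (T : {set X * X}) (C : seq {set X}), is_top A T -> ~~ is_comp A C -> psi A T C = 0),
      (forall (s : {perm X}) (A : {set X}) (T : {set X * X}) (C : seq {set X}), is_top A T ->
          psi (s @: A) (relabel s T) [seq s @: B | B : {set X} <- C] = psi A T C),
      (forall C : seq {set X}, psi set0 set0 C = (C == [::])%:R),
      (forall (A B : {set X}) (T1 T2 : {set X * X}) (C : seq {set X}), [disjoint A & B] -> is_top A T1 -> is_top B T2 ->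
          psi (A :|: B) (T1 :|: T2) C = cprod A B (psi A T1) (psi B T2) C) &
      (* coproduct: Delta_{A,B} o psi = (psi (x) psi) o Delta_{A,B} *)
      (forall (A B : {set X}) (T : {set X * X}) (C1 C2 : seq {set X}), [disjoint A & B] -> is_top (A :|: B) T ->
          is_comp A C1 -> is_comp B C2 ->
          psi (A :|: B) T (C1 ++ C2) =
            if open_in B T then psi A (restr A T) C1 * psi B (restr B T) C2
            else 0)].

Definition eps'_compat (psi : {set X} -> {set X * X} -> seq {set X} -> K)
    : Prop :=
  forall (A : {set X}) (T : {set X * X}), is_top A T -> eps'_comp A (psi A T) = eps'_top T.

Definition Phi (A : {set X}) (T : {set X * X}) : seq {set X} -> K :=
  fun C => \sum_(f : sfun | inL A T f && (blocks A f == C)) 1.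

End TopComp.

(* Under the bijection f |-> (f^{-1}(1), ..., f^{-1}(max f)) between
   surjections and set compositions, L(T) corresponds to the compositions of A that are
   T-compatible: T-related elements lie in weakly increasing blocks, and in the same block only
   when T-equivalent.  So Phi(T) is the indicator of the T-compatible compositions, and each
   axiom becomes a statement about compatibility.  A concatenation C1 C2 of compositions of
   A and B is compatible iff B is open and C1, C2 are compatible with T|A, T|B.  A composition
   of A u B is compatible with T1 u T2 iff its restrictions to A and to B are, and it occurs,
   exactly once, only among the quasi-shuffles of these two restrictions.
   Uniqueness goes by induction on the number of blocks: the coproduct splits off the first
   block, a single block is fixed by the counit and the empty composition by the unit. *)

From mathcomp Require Import all_boot all_order all_algebra.
From mathcomp Require Import perm.
Set Implicit Arguments. Unset Strict Implicit. Unset Printing Implicit Defensive.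
Import GRing.Theory.
Local Open Scope ring_scope.

Lemma find_filter_leq (I : Type) (P p q : pred I) (s : seq I) :
  subpred p P -> subpred q P ->
  (find p (filter P s) <= find q (filter P s))%N = (find p s <= find q s)%N.
Proof.
move=> pP qP; elim: s => //= c s IH; case Pc: (P c) => /=.
  by case pc: (p c); case qc: (q c) => //=; rewrite ltnS.
by rewrite (contraFF (@pP c)) ?(contraFF (@qP c)).
Qed.

Lemma find_filter_eq (I : Type) (P p q : pred I) (s : seq I) :
  subpred p P -> subpred q P ->
  (find p (filter P s) == find q (filter P s)) = (find p s == find q s).
Proof.
move=> pP qP; elim: s => //= c s IH; case Pc: (P c) => /=.
  by case pc: (p c); case qc: (q c) => //=; rewrite eqSS.
by rewrite (contraFF (@pP c)) ?(contraFF (@qP c)).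
Qed.

Section TopComp.
Variables (X : finType) (K : fieldType).
Implicit Types (A B c : {set X}) (T : {set X * X}) (C s t : seq {set X}) (f : sfun X).

Lemma disjointP (B1 B2 : {set X}) :
  reflect (forall x, x \in B1 -> x \notin B2) [disjoint B1 & B2].
Proof.
apply: (iffP idP) => [dj x /(disjointFr dj) -> // | H].
by rewrite disjoints_subset; apply/subsetP => x /H; rewrite inE.
Qed.

Lemma bigcup_has C x : (x \in \bigcup_(B <- C) B) = has (fun B => x \in B) C.
Proof. by elim: C => [|B C IH]; rewrite ?big_nil ?big_cons ?inE //= IH. Qed.

(** * Set compositions *)

(* [size C] when [x] lies in no block. *)
Definition pos C (x : X) : nat := find (fun B : {set X} => x \in B) C.

Lemma comp_cover A C x : is_comp A C -> has (fun B => x \in B) C = (x \in A).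
Proof. by case/and3P=> _ _ /eqP <-; rewrite bigcup_has. Qed.

Lemma comp_sub A C B : is_comp A C -> B \in C -> B \subset A.
Proof.
by move=> HC BC; apply/subsetP => x xB; rewrite -(comp_cover _ HC); apply/hasP; exists B.
Qed.

Lemma comp_pos_lt A C x : is_comp A C -> x \in A -> (pos C x < size C)%N.
Proof. by move=> HC xA; rewrite /pos -has_find (comp_cover _ HC). Qed.

Lemma mem_nth_pos A C x : is_comp A C -> x \in A -> x \in nth set0 C (pos C x).
Proof.
move=> HC xA; apply: (nth_find set0 (a := fun B : {set X} => x \in B)).
by rewrite (comp_cover _ HC).
Qed.

Lemma comp_nth_in A C i x :
  is_comp A C -> (i < size C)%N -> x \in nth set0 C i -> x \in A.
Proof. by move=> HC iC xi; rewrite -(comp_cover _ HC); apply/(has_nthP set0); exists i. Qed.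

Lemma pos_comp_nth A C i x :
  is_comp A C -> (i < size C)%N -> x \in nth set0 C i -> pos C x = i.
Proof.
move=> HC iC xi; have xA := comp_nth_in HC iC xi.
have xp := mem_nth_pos HC xA; have pC := comp_pos_lt HC xA.
case/and3P: HC => _ /(pairwiseP set0) Hpw _.
have meet j k : (j < size C)%N -> (k < size C)%N -> (j < k)%N ->
    x \in nth set0 C j -> x \in nth set0 C k -> False.
  by move=> jC kC jk xj xk; move/disjointP/(_ x xj): (Hpw _ _ jC kC jk); rewrite xk.
case: (ltngtP (pos C x) i) => // lt; first by case: (meet _ _ pC iC lt xp xi).
by case: (meet _ _ iC pC lt xi xp).
Qed.

Lemma comp_nth_neq0 A C i : is_comp A C -> (i < size C)%N -> nth set0 C i != set0.
Proof. by case/and3P=> H0 _ _ iC; apply: contraNneq H0 => <-; apply: mem_nth. Qed.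

Lemma comp_cons A c C : is_comp A (c :: C) ->
  [/\ c != set0, [disjoint c & \bigcup_(B <- C) B],
      is_comp (\bigcup_(B <- C) B) C & A = c :|: \bigcup_(B <- C) B].
Proof.
case/and3P; rewrite in_cons negb_or pairwise_cons big_cons eq_sym.
move=> /andP[c0 C0] /andP[/allP Hc HpC] /eqP <-; split=> //.
- apply/disjointP => x xc; rewrite bigcup_has; apply/hasP => -[B BC xB].
  by move/disjointP/(_ x xc): (Hc B BC); rewrite xB.
- by rewrite /is_comp C0 HpC eqxx.
Qed.

Lemma comp_size A C : is_comp A C -> (size C <= #|A|)%N.
Proof.
elim: C A => [|c C IH] A //= /comp_cons[c0 dj HC ->].
rewrite cardsU (disjoint_setI0 dj) cards0 subn0 -add1n.
by apply: leq_add; [rewrite card_gt0 | apply: IH].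
Qed.

Lemma comp_set0 C : is_comp set0 C = (C == [::]).
Proof.
case: C => [|c C]; first by rewrite /is_comp big_nil eqxx.
by apply/negP => /comp_cons[c0 _ _ /esym/eqP]; rewrite setU_eq0 (negbTE c0).
Qed.

Lemma surj_range A f a : is_surj A f -> a \in A -> (1 <= f a <= fmax A f)%N.
Proof.
case/and3P=> _ /forall_inP f_pos _ aA; rewrite f_pos //=.
exact: (@leq_bigmax_cond X (mem A) (fun x => nat_of_ord (f x))).
Qed.

Lemma surj_out A f x : is_surj A f -> x \notin A -> (f x : nat) = 0%N.
Proof. by case/and3P=> /forallP/(_ x)/implyP f0 _ _ /f0/eqP. Qed.

Lemma surj_hit A f i : is_surj A f -> (1 <= i <= fmax A f)%N ->
  exists2 a, a \in A & (f a : nat) = i.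
Proof.
case/and3P=> _ _ /forallP f_onto /[dup] /andP[_ i_max] hi.
have iX : (i < #|X|.+1)%N.
  by rewrite ltnS (leq_trans i_max) //; apply/bigmax_leqP => a _; rewrite -ltnS.
by have /implyP/(_ hi)/exists_inP[a aA /eqP] := f_onto (Ordinal iX); exists a.
Qed.

Lemma size_blocks A f : size (blocks A f) = fmax A f.
Proof. by rewrite size_map size_iota. Qed.

Lemma nth_blocks A f i : (i < fmax A f)%N ->
  nth set0 (blocks A f) i = [set a in A | (f a : nat) == i.+1].
Proof. by move=> hi; rewrite (nth_map 0%N) ?size_iota // nth_iota // add1n. Qed.

Lemma blocks_comp A f : is_surj A f -> is_comp A (blocks A f).
Proof.
move=> Hs; apply/and3P; split.
- apply/negP => /(nthP set0)[i]; rewrite size_blocks => hi.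
  have [a aA fa] := surj_hit (i := i.+1) Hs hi.
  by rewrite nth_blocks // => /setP/(_ a); rewrite !inE aA fa eqxx.
- apply/(pairwiseP set0) => i j; rewrite !inE size_blocks => hi hj ij.
  rewrite !nth_blocks //; apply/disjointP => x; rewrite !inE => /andP[_ /eqP->].
  by rewrite eqSS (ltn_eqF ij) andbF.
- apply/eqP/setP => x; rewrite bigcup_has has_map.
  case: (boolP (x \in A)) => xA; last by apply/hasP => -[i _]; rewrite /= inE (negbTE xA).
  apply/hasP; exists (f x : nat); last by rewrite /= inE xA eqxx.
  by rewrite mem_iota add1n ltnS surj_range.
Qed.

Lemma surj_pos A f a : is_surj A f -> a \in A -> (f a : nat) = (pos (blocks A f) a).+1.
Proof.
move=> Hs aA; have /andP[f1 f_max] := surj_range Hs aA.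
have hi : ((f a).-1 < fmax A f)%N by rewrite prednK.
rewrite (@pos_comp_nth A _ (f a).-1) ?prednK ?size_blocks ?blocks_comp //.
by rewrite nth_blocks // inE aA /= prednK.
Qed.

Lemma blocks_inj A f g : is_surj A f -> is_surj A g -> blocks A f = blocks A g -> f = g.
Proof.
move=> Hf Hg E; apply/ffunP => x; apply/val_inj => /=.
case: (boolP (x \in A)) => xA; last by rewrite (surj_out Hf xA) (surj_out Hg xA).
by rewrite (surj_pos Hf xA) (surj_pos Hg xA) E.
Qed.

(* Inverse of [blocks] on the set compositions of [A]. *)
Definition comp_fun A C : sfun X :=
  [ffun x => inord (if x \in A then (pos C x).+1 else 0%N)].

Lemma comp_funE A C x : is_comp A C ->
  (comp_fun A C x : nat) = if x \in A then (pos C x).+1 else 0%N.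
Proof.
move=> HC; rewrite ffunE inordK //; case: ifP => xA //.
by rewrite ltnS (leq_trans (comp_pos_lt HC xA)) // (leq_trans (comp_size HC)) ?max_card.
Qed.

Lemma fmax_comp_fun A C : is_comp A C -> fmax A (comp_fun A C) = size C.
Proof.
move=> HC; apply/eqP; rewrite eqn_leq; apply/andP; split.
  by apply/bigmax_leqP => a aA; rewrite comp_funE // aA (comp_pos_lt HC).
case E: (size C) => [|n] //; have nC : (n < size C)%N by rewrite E.
have /set0Pn[a an] := comp_nth_neq0 HC nC; have aA := comp_nth_in HC nC an.
have := @leq_bigmax_cond X (mem A) (fun x => nat_of_ord (comp_fun A C x)) a aA.
by rewrite comp_funE // aA (pos_comp_nth HC nC an).
Qed.

Lemma comp_fun_surj A C : is_comp A C -> is_surj A (comp_fun A C).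
Proof.
move=> HC; apply/and3P; split.
- by apply/forallP => x; apply/implyP => xA; rewrite comp_funE // (negbTE xA).
- by apply/forall_inP => a aA; rewrite comp_funE // aA.
apply/forallP => i; apply/implyP; rewrite fmax_comp_fun // => /andP[i1 iC].
have nC : (i.-1 < size C)%N by rewrite prednK.
have /set0Pn[a an] := comp_nth_neq0 HC nC; have aA := comp_nth_in HC nC an.
by apply/exists_inP; exists a; rewrite // comp_funE // aA (pos_comp_nth HC nC an) prednK.
Qed.

Lemma blocks_comp_fun A C : is_comp A C -> blocks A (comp_fun A C) = C.
Proof.
move=> HC; apply: (@eq_from_nth _ set0); rewrite size_blocks fmax_comp_fun // => i iC.
rewrite nth_blocks ?fmax_comp_fun //; apply/setP => x; rewrite inE comp_funE //.
case: (boolP (x \in A)) => xA /=.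
  by rewrite eqSS; apply/eqP/idP => [<-|]; [exact: mem_nth_pos HC xA | exact: pos_comp_nth HC iC].
by apply/esym/negP => xi; rewrite (comp_nth_in HC iC xi) in xA.
Qed.

Lemma mem_comps A C : (C \in comps A) = is_comp A C.
Proof.
rewrite mem_undup; apply/mapP/idP => [[f] | HC].
  by rewrite mem_enum => Hs ->; apply: blocks_comp.
by exists (comp_fun A C); rewrite ?blocks_comp_fun // mem_enum inE comp_fun_surj.
Qed.

(** * Compatible compositions *)

(* For a composition [C] of [A]: [C = blocks A f] for some [f] in L(T). *)
Definition compatible T C : bool :=
  [forall a, forall b, ((a, b) \in T) ==>
     (pos C a <= pos C b)%N && ((pos C a == pos C b) ==> ((b, a) \in T))].

Lemma compatibleP T C :
  reflect (forall a b, (a, b) \in T ->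
             (pos C a <= pos C b)%N && ((pos C a == pos C b) ==> ((b, a) \in T)))
          (compatible T C).
Proof.
apply: (iffP forallP) => [H a b | H a]; first exact/implyP/(forallP (H a)).
by apply/forallP => b; apply/implyP/H.
Qed.

Lemma top_sub A T : is_top A T -> T \subset setX A A.
Proof. by case/and3P. Qed.

Lemma mem_sub_setX A T a b : T \subset setX A A -> (a, b) \in T -> (a \in A) && (b \in A).
Proof. by move=> /subsetP TA /TA; rewrite in_setX. Qed.

Lemma inL_blocks A T f : T \subset setX A A -> is_surj A f ->
  inL A T f = compatible T (blocks A f).
Proof.
move=> TA Hs; rewrite /inL Hs /=.
have posE a b : (a, b) \in T -> (f a : nat) = (pos (blocks A f) a).+1 /\
                                  (f b : nat) = (pos (blocks A f) b).+1.
  by move=> /(mem_sub_setX TA)/andP[aA bA]; rewrite !(surj_pos Hs).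
apply/andP/compatibleP => [[/forallP mono /forallP refl] a b ab | H].
  move: (forallP (mono a) b) (forallP (refl a) b); have [-> ->] := posE a b ab.
  by rewrite ab ltnS eqSS /= => -> ->.
split; apply/forallP => a; apply/forallP => b; apply/implyP.
  by move=> ab; have [-> ->] := posE a b ab; rewrite ltnS; case/andP: (H a b ab).
by case/andP=> ab; have [-> ->] := posE a b ab; rewrite eqSS; case/andP: (H a b ab) => _ /implyP.
Qed.

Lemma PhiE A T C : T \subset setX A A -> Phi K A T C = (is_comp A C && compatible T C)%:R.
Proof.
move=> TA; rewrite /Phi; case: (boolP (is_comp A C && compatible T C)) => [/andP[HC ok] | H].
  rewrite (big_pred1 (comp_fun A C)) // => f /=; apply/andP/eqP => [[Lf /eqP Cf] | ->].
    apply: (@blocks_inj A); rewrite ?comp_fun_surj ?blocks_comp_fun ?Cf //.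
    by case/and3P: Lf.
  by rewrite blocks_comp_fun // eqxx inL_blocks ?blocks_comp_fun ?comp_fun_surj.
rewrite big_pred0 // => f; apply/andP => -[Lf /eqP Cf]; have Hs : is_surj A f by case/and3P: Lf.
by move: H; rewrite -Cf blocks_comp //= -inL_blocks ?Lf.
Qed.

Lemma natr_andb (a b : bool) : ((a && b)%:R : K) = a%:R * b%:R.
Proof. by rewrite -mulnb natrM. Qed.

Lemma Phi_out A T C : is_top A T -> ~~ is_comp A C -> Phi K A T C = 0.
Proof. by move=> /top_sub TA HC; rewrite PhiE // (negbTE HC). Qed.

Lemma Phi_unit C : Phi K set0 set0 C = (C == [::])%:R.
Proof.
rewrite PhiE ?sub0set // comp_set0.
have -> : compatible set0 C by apply/compatibleP => a b; rewrite inE.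
by rewrite andbT.
Qed.

Lemma comp_cat A B C1 C2 : [disjoint A & B] -> is_comp A C1 -> is_comp B C2 ->
  is_comp (A :|: B) (C1 ++ C2).
Proof.
move=> dAB H1 H2; case/and3P: (H1) (H2) => n1 p1 /eqP U1 /and3P[n2 p2 /eqP U2].
rewrite /is_comp mem_cat negb_or n1 n2 pairwise_cat p1 p2 big_cat U1 U2 eqxx !andbT /=.
apply/allrelP => B1 B2 /(comp_sub H1) B1A /(comp_sub H2) B2B.
exact: disjointW B1A B2B dAB.
Qed.

Lemma pos_cat A C1 C2 x : is_comp A C1 ->
  pos (C1 ++ C2) x = if x \in A then pos C1 x else (size C1 + pos C2 x)%N.
Proof. by move=> H1; rewrite /pos find_cat (comp_cover _ H1). Qed.

Lemma in_restr B T a b : ((a, b) \in restr B T) = [&& (a, b) \in T, a \in B & b \in B].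
Proof. by rewrite !inE. Qed.

(* Blocks of [C1] come before those of [C2], so [T] may not point from [B] back into [A]. *)
Lemma compatible_cat A B T C1 C2 : [disjoint A & B] -> T \subset setX (A :|: B) (A :|: B) ->
  is_comp A C1 -> is_comp B C2 ->
  compatible T (C1 ++ C2) =
    [&& open_in B T, compatible (restr A T) C1 & compatible (restr B T) C2].
Proof.
move=> dAB TAB H1 H2.
have posA x : x \in A -> pos (C1 ++ C2) x = pos C1 x by move=> xA; rewrite (pos_cat _ _ H1) xA.
have posB x : x \in B -> pos (C1 ++ C2) x = (size C1 + pos C2 x)%N.
  by move=> xB; rewrite (pos_cat _ _ H1) (disjointFl dAB xB).
have ltA x y : x \in A -> (pos C1 x < size C1 + y)%N.
  by move=> xA; rewrite ltn_addr // (comp_pos_lt H1).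
have inAB a b : (a, b) \in T -> (a \in A :|: B) && (b \in A :|: B) by apply: mem_sub_setX.
apply/compatibleP/and3P => [H | [/forallP op /compatibleP HA /compatibleP HB] a b ab].
  split.
  - apply/forallP => a; apply/forallP => b; apply/implyP => /andP[ab aB].
    case/andP: (inAB a b ab) => _; rewrite in_setU; case: (boolP (b \in A)) => //= bA _.
    by move: (H a b ab); rewrite (posB a) // (posA b) // leqNgt ltA.
  - apply/compatibleP => a b; rewrite in_restr => /and3P[ab aA bA].
    by move: (H a b ab); rewrite !posA // in_restr bA aA !andbT.
  - apply/compatibleP => a b; rewrite in_restr => /and3P[ab aB bB].
    by move: (H a b ab); rewrite !posB // leq_add2l eqn_add2l in_restr bB aB !andbT.
case/andP: (inAB a b ab); rewrite !in_setU.
case: (boolP (a \in A)) => [aA _|_ /= aB _].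
  case: (boolP (b \in A)) => [bA _ | _ /= bB].
    by move: (HA a b); rewrite !in_restr ab aA bA !posA // !andbT => /(_ isT).
  by rewrite posA // posB // ltnW ?ltn_eqF ?ltA.
have bB : b \in B by apply: (implyP (forallP (op a) b)); rewrite ab aB.
by move: (HB a b); rewrite !in_restr ab aB bB !posB // leq_add2l eqn_add2l !andbT => /(_ isT).
Qed.

Lemma Phi_coprod A B T C1 C2 : [disjoint A & B] -> is_top (A :|: B) T ->
  is_comp A C1 -> is_comp B C2 ->
  Phi K (A :|: B) T (C1 ++ C2) =
    if open_in B T then Phi K A (restr A T) C1 * Phi K B (restr B T) C2 else 0.
Proof.
move=> dAB /top_sub TAB H1 H2.
rewrite !PhiE ?subsetIr // comp_cat // (compatible_cat dAB TAB H1 H2) H1 H2.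
by case: (open_in B T); rewrite /= ?natr_andb.
Qed.

Lemma is_comp_relabel (s : {perm X}) A C :
  is_comp (s @: A) [seq s @: B | B <- C] = is_comp A C.
Proof.
have s_inj : injective (fun B : {set X} => s @: B) by apply/imset_inj/perm_inj.
have bigU : \bigcup_(B <- [seq s @: B | B <- C]) B = s @: \bigcup_(B <- C) B.
  by elim: C => [|B C IH]; rewrite ?big_nil ?imset0 // !big_cons IH imsetU.
rewrite /is_comp bigU (inj_eq s_inj) pairwise_map -{1}(imset0 s) (mem_map s_inj).
congr [&& _, _ & _]; apply: eq_pairwise => B1 B2 /=.
by rewrite -!setI_eq0 -imsetI ?imset_eq0 // => x y _ _; apply: perm_inj.
Qed.

Lemma pos_relabel (s : {perm X}) C x : pos [seq s @: B | B <- C] (s x) = pos C x.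
Proof. by rewrite /pos find_map; apply: eq_find => B /=; apply: mem_imset; apply: perm_inj. Qed.

Lemma in_relabel (s : {perm X}) T a b : ((s a, s b) \in relabel s T) = ((a, b) \in T).
Proof. by apply: (mem_imset _ (a, b)) => -[a1 b1] [a2 b2] /= [/perm_inj -> /perm_inj ->]. Qed.

Lemma compatible_relabel (s : {perm X}) T C :
  compatible (relabel s T) [seq s @: B | B <- C] = compatible T C.
Proof.
apply/compatibleP/compatibleP => H a b.
  by move: (H (s a) (s b)); rewrite !in_relabel !pos_relabel.
rewrite -[a](permKV s) -[b](permKV s) !in_relabel !pos_relabel; exact: H.
Qed.

Lemma Phi_relabel (s : {perm X}) A T C : is_top A T ->
  Phi K (s @: A) (relabel s T) [seq s @: B | B <- C] = Phi K A T C.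
Proof.
move=> /top_sub TA; rewrite !PhiE ?is_comp_relabel ?compatible_relabel //.
apply/subsetP => _ /imsetP[[a b] ab ->]; have /andP[aA bA] := mem_sub_setX TA ab.
by rewrite in_setX !imset_f.
Qed.

Definition trivial_comp A : seq {set X} := if A == set0 then [::] else [:: A].

Lemma trivial_compP A : is_comp A (trivial_comp A).
Proof.
rewrite /trivial_comp; case: ifP => [/eqP -> | A0]; first by rewrite comp_set0.
by rewrite /is_comp big_seq1 inE eq_sym A0 eqxx.
Qed.

Lemma size_comp_le1 A C : is_comp A C -> (size C <= 1)%N = (C == trivial_comp A).
Proof.
rewrite /trivial_comp; case: C => [|c [|d C]] HC.
- by case/and3P: HC; rewrite big_nil => _ _ /eqP <-; rewrite eqxx.
- by case/comp_cons: HC; rewrite big_nil setU0 => c0 _ _ ->; rewrite (negbTE c0) eqxx.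
- by case: (A == set0); rewrite // eqseq_cons andbF.
Qed.

Lemma eps'_compE A (c : seq {set X} -> K) : eps'_comp A c = c (trivial_comp A).
Proof.
rewrite /eps'_comp (bigD1_seq (trivial_comp A)) ?mem_comps ?trivial_compP ?undup_uniq //=.
rewrite (size_comp_le1 (trivial_compP A)) eqxx mulr1 big1_seq ?addr0 // => C /andP[CA].
by rewrite mem_comps => HC; rewrite (size_comp_le1 HC) (negbTE CA) mulr0.
Qed.

Lemma Phi_eps'_compat : eps'_compat (@Phi X K).
Proof.
move=> A T /top_sub TA; rewrite eps'_compE PhiE // trivial_compP /eps'_top /=.
suff -> : compatible T (trivial_comp A) = is_equiv T by [].
have pos0 a b : (a, b) \in T -> pos (trivial_comp A) a = 0%N /\ pos (trivial_comp A) b = 0%N.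
  move=> /(mem_sub_setX TA)/andP[aA bA]; rewrite /trivial_comp.
  by case: eqP aA => [-> | _ aA]; rewrite ?inE // /pos /= aA bA.
rewrite /is_equiv; apply/compatibleP/forallP => [H a | H a b ab].
  by apply/forallP => b; apply/implyP => ab; move: (H a b ab); have [-> ->] := pos0 a b ab.
by have [-> ->] := pos0 a b ab; rewrite leqnn /=; apply: (implyP (forallP (H a) b)).
Qed.

(** * Restrictions and quasi-shuffles *)

Definition comp_restr A C : seq {set X} := [seq c :&: A | c <- C & c :&: A != set0].

Definition nonempty_parts A (s : seq {set X}) : bool :=
  all (fun c => (c != set0) && (c \subset A)) s.

Lemma comp_restr_cons A c C : comp_restr A (c :: C) =
  if c :&: A != set0 then c :&: A :: comp_restr A C else comp_restr A C.
Proof. by rewrite /comp_restr /=; case: ifP. Qed.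

Lemma comp_restr_in A c C :
  c != set0 -> c \subset A -> comp_restr A (c :: C) = c :: comp_restr A C.
Proof. by move=> c0 cA; rewrite comp_restr_cons (setIidPl cA) c0. Qed.

Lemma comp_restr_out A c C : [disjoint c & A] -> comp_restr A (c :: C) = comp_restr A C.
Proof. by move=> dj; rewrite comp_restr_cons (disjoint_setI0 dj) eqxx. Qed.

Lemma comp_restr_id A s : nonempty_parts A s -> comp_restr A s = s.
Proof. by elim: s => // c s IH /andP[/andP[c0 cA] /IH s_id]; rewrite comp_restr_in ?s_id. Qed.

Lemma comp_restr_nil A B s : [disjoint A & B] -> nonempty_parts B s -> comp_restr A s = [::].
Proof.
move=> dAB; elim: s => // c s IH /andP[/andP[_ cB] /IH s_nil].
by rewrite comp_restr_out ?s_nil // disjoint_sym (disjointWr cB dAB).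
Qed.

Lemma nonempty_partsW A A' s : A \subset A' -> nonempty_parts A s -> nonempty_parts A' s.
Proof. by move=> AA' /allP Ps; apply/allP => c /Ps /andP[-> /subset_trans->]. Qed.

Lemma comp_nonempty_parts A C : is_comp A C -> nonempty_parts A C.
Proof.
move=> HC; apply/allP => c cC; rewrite (comp_sub HC cC) andbT.
by case/and3P: HC => C0 _ _; apply: contraNneq C0 => <-.
Qed.

Lemma count_comp_restr A C x : x \in A ->
  count (fun c => x \in c) (comp_restr A C) = count (fun c => x \in c) C.
Proof.
move=> xA; rewrite count_map count_filter; apply: eq_count => c /=.
rewrite inE xA andbT; case: (boolP (x \in c)) => //= xc.
by apply/set0Pn; exists x; rewrite inE xc.
Qed.

Lemma pairwise_disjointE C :
  pairwise (fun B1 B2 : {set X} => [disjoint B1 & B2]) C =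
    [forall x, count (fun c => x \in c) C <= 1]%N.
Proof.
have count0 x C' : (count (fun c => x \in c) C' <= 0)%N = ~~ has (fun c => x \in c) C'.
  by rewrite leqn0 eqn0Ngt has_count.
elim: C => [|c C IH]; first by apply/esym/forallP.
rewrite pairwise_cons IH; apply/andP/forallP => [[/allP dc /forallP H] x | H].
  rewrite /=; case: (boolP (x \in c)) => xc; last exact: H.
  by rewrite add1n ltnS count0; apply/hasPn => d /dc /disjointP; apply.
split; last by apply/forallP => x; apply: leq_trans (H x); apply: leq_addl.
apply/allP => d dC; apply/disjointP => x xc.
by apply: contraL (H x) => xd; rewrite -ltnNge /= xc add1n ltnS -has_count; apply/hasP; exists d.
Qed.

Lemma comp_restr_comp D A C : is_comp D C -> A \subset D -> is_comp A (comp_restr A C).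
Proof.
move=> HC AD; case/and3P: (HC) => _ pC _; apply/and3P; split.
- by apply/mapP => -[c]; rewrite mem_filter => /andP[c0 _] /esym/eqP; apply/negP.
- rewrite pairwise_map; apply/pairwise_filter/(sub_pairwise _ pC) => c1 c2 /=.
  exact: disjointW (subsetIl _ _) (subsetIl _ _).
apply/eqP/setP => x; rewrite bigcup_has has_count.
case: (boolP (x \in A)) => xA.
  by rewrite count_comp_restr // -has_count (comp_cover _ HC) (subsetP AD).
apply/negbTE; rewrite -has_count; apply/hasPn => _ /mapP[c _ ->].
by rewrite inE (negbTE xA) andbF.
Qed.

Lemma comp_setU A B C : [disjoint A & B] ->
  is_comp (A :|: B) C =
    [&& nonempty_parts (A :|: B) C, is_comp A (comp_restr A C) & is_comp B (comp_restr B C)].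
Proof.
move=> dAB; apply/idP/and3P => [HC | [PC HA HB]].
  by rewrite comp_nonempty_parts ?(comp_restr_comp HC (subsetUl A B))
             ?(comp_restr_comp HC (subsetUr A B)).
have countE x : count (fun c => x \in c) C =
    if x \in A then count (fun c => x \in c) (comp_restr A C)
    else if x \in B then count (fun c => x \in c) (comp_restr B C) else 0%N.
  case: ifPn => xA; first by rewrite count_comp_restr.
  case: ifPn => xB; first by rewrite count_comp_restr.
  apply/eqP; rewrite eqn0Ngt -has_count; apply/hasPn => c /(allP PC)/andP[_ /subsetP cAB].
  by apply/negP => /cAB; rewrite in_setU (negbTE xA) (negbTE xB).
case/and3P: (HA) (HB) => _ + _ /and3P[_ + _]; rewrite !pairwise_disjointE => pA pB.
apply/and3P; split.
- by apply/negP => /(allP PC); rewrite eqxx.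
- rewrite pairwise_disjointE; apply/forallP => x; rewrite countE.
  by case: ifP => _; [apply: (forallP pA) | case: ifP => _; [apply: (forallP pB) |]].
apply/eqP/setP => x; rewrite bigcup_has has_count countE in_setU.
by case: ifP => xA; [|case: ifP => xB]; rewrite -?has_count ?(comp_cover _ HA) ?(comp_cover _ HB).
Qed.

Lemma qsh_cons a b s t : qsh (a :: s) (b :: t) =
  [seq a :: u | u <- qsh s (b :: t)] ++ [seq b :: u | u <- qsh (a :: s) t] ++
  [seq (a :|: b) :: u | u <- qsh s t].
Proof. by []. Qed.

Lemma qsh_nilr s : qsh s [::] = [:: s].
Proof. by case: s. Qed.

Lemma qsh_restr A B s t C : [disjoint A & B] -> nonempty_parts A s -> nonempty_parts B t ->
  C \in qsh s t -> [/\ nonempty_parts (A :|: B) C, comp_restr A C = s & comp_restr B C = t].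
Proof.
move=> dAB; have dBA : [disjoint B & A] by rewrite disjoint_sym.
elim: s t C => [|a s IHs] t C Ps Pt.
  rewrite inE => /eqP ->; split; last exact: comp_restr_id.
    exact: nonempty_partsW (subsetUr A B) Pt.
  exact: comp_restr_nil dAB Pt.
elim: t C Pt => [|b t IHt] C Pt.
  rewrite qsh_nilr inE => /eqP ->; split; first exact: nonempty_partsW (subsetUl A B) Ps.
    exact: comp_restr_id.
  exact: comp_restr_nil dBA Ps.
have /andP[/andP[a0 aA] Ps'] := Ps; have /andP[/andP[b0 bB] Pt'] := Pt.
have aB : [disjoint a & B] := disjointWl aA dAB.
have bA : [disjoint b & A] := disjointWl bB dBA.
have aAB : a \subset A :|: B := subset_trans aA (subsetUl A B).
have bAB : b \subset A :|: B := subset_trans bB (subsetUr A B).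
rewrite qsh_cons !mem_cat => /or3P[] /mapP[u u_sh ->].
- have [Pu ruA ruB] := IHs _ _ Ps' Pt u_sh.
  by rewrite /nonempty_parts /= a0 aAB comp_restr_in // comp_restr_out // ruA ruB.
- have [Pu ruA ruB] := IHt _ Pt' u_sh.
  by rewrite /nonempty_parts /= b0 bAB (comp_restr_out u bA) (comp_restr_in u b0 bB) ruA ruB.
have [Pu ruA ruB] := IHs _ _ Ps' Pt' u_sh.
have abA : (a :|: b) :&: A = a by rewrite setIUl (setIidPl aA) (disjoint_setI0 bA) setU0.
have abB : (a :|: b) :&: B = b by rewrite setIUl (setIidPl bB) (disjoint_setI0 aB) set0U.
rewrite /nonempty_parts /= setU_eq0 negb_and a0 setUSS // !comp_restr_cons abA abB a0 b0.
by rewrite ruA ruB.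
Qed.

Lemma qsh_complete A B C : nonempty_parts (A :|: B) C ->
  C \in qsh (comp_restr A C) (comp_restr B C).
Proof.
elim: C => [|c C IH] /=; first by rewrite inE.
case/andP => /andP[c0 cAB] /IH {}IH.
have Ec : c = c :&: A :|: c :&: B by rewrite -setIUr (setIidPl cAB).
rewrite !comp_restr_cons.
case: (boolP (c :&: A != set0)) => hA; case: (boolP (c :&: B != set0)) => hB.
- by rewrite qsh_cons !mem_cat -Ec map_f ?orbT.
- move: hB; rewrite negbK => /eqP cB0; rewrite {1}Ec cB0 setU0.
  case: (comp_restr B C) IH => [|b t] IH.
    by rewrite !qsh_nilr !inE in IH *; rewrite eqseq_cons eqxx IH.
  by rewrite qsh_cons !mem_cat map_f.
- move: hA; rewrite negbK => /eqP cA0; rewrite {1}Ec cA0 set0U.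
  case: (comp_restr A C) IH => [|a s] IH.
    by rewrite !inE in IH *; rewrite eqseq_cons eqxx IH.
  by rewrite qsh_cons !mem_cat map_f ?orbT.
by move: hA hB; rewrite !negbK => /eqP cA0 /eqP cB0; rewrite Ec cA0 cB0 setU0 eqxx in c0.
Qed.

Lemma qsh_uniq A B s t : [disjoint A & B] -> nonempty_parts A s -> nonempty_parts B t ->
  uniq (qsh s t).
Proof.
move=> dAB; have dBA : [disjoint B & A] by rewrite disjoint_sym.
have not_sub (D E d e : {set X}) :
    [disjoint D & E] -> d != set0 -> d \subset D -> e \subset E -> ~~ (d \subset e).
  move=> dDE /set0Pn[x xd] /subsetP dD /subsetP eE; apply/negP => /subsetP /(_ x xd) /eE.
  by rewrite (disjointFr dDE (dD x xd)).
have heads_disj (h1 h2 : {set X}) (L1 L2 : seq (seq {set X})) : h1 != h2 ->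
    ~~ has (mem [seq h1 :: u | u <- L1]) [seq h2 :: u | u <- L2].
  move=> ne; apply/hasPn => _ /mapP[u _ ->]; apply/mapP => -[v _ [/eqP]].
  by rewrite eq_sym (negbTE ne).
have cons_inj (h : {set X}) : injective (cons h) by move=> u v [].
elim: s t => [|a s IHs] t // Ps; elim: t => [|b t IHt] Pt; first by rewrite qsh_nilr.
have /andP[/andP[a0 aA] Ps'] := Ps; have /andP[/andP[b0 bB] Pt'] := Pt.
have ab : a != b by apply: contraNneq (not_sub _ _ _ _ dAB a0 aA bB) => ->.
have a_ab : a != a :|: b.
  by apply: contraNneq (not_sub _ _ _ _ dBA b0 bB aA) => ->; rewrite subsetUr.
have b_ab : b != a :|: b.
  by apply: contraNneq (not_sub _ _ _ _ dAB a0 aA bB) => ->; rewrite subsetUl.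
rewrite qsh_cons !cat_uniq !(map_inj_uniq (cons_inj _)) has_cat negb_or !heads_disj //.
by rewrite IHs // IHt // IHs.
Qed.

Lemma count_qsh A B C1 C2 C : [disjoint A & B] -> is_comp A C1 -> is_comp B C2 ->
  count_mem C (qsh C1 C2) =
    [&& is_comp (A :|: B) C, C1 == comp_restr A C & C2 == comp_restr B C].
Proof.
move=> dAB H1 H2; have P1 := comp_nonempty_parts H1; have P2 := comp_nonempty_parts H2.
rewrite count_uniq_mem ?(qsh_uniq dAB P1 P2) //; congr (nat_of_bool _).
apply/idP/and3P => [/(qsh_restr dAB P1 P2)[PC rA rB] | [HC /eqP-> /eqP->]].
  by rewrite comp_setU // PC rA rB H1 H2 !eqxx.
exact: qsh_complete (comp_nonempty_parts HC).
Qed.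

Lemma pos_comp_restr A C x : x \in A ->
  pos (comp_restr A C) x = find (fun c => x \in c) [seq c <- C | c :&: A != set0].
Proof. by move=> xA; rewrite /pos find_map; apply: eq_find => c /=; rewrite inE xA andbT. Qed.

Lemma meets_of_mem A c x : x \in A -> x \in c -> c :&: A != set0.
Proof. by move=> xA xc; apply/set0Pn; exists x; rewrite inE xc. Qed.

Lemma leq_pos_restr A C a b : a \in A -> b \in A ->
  (pos (comp_restr A C) a <= pos (comp_restr A C) b)%N = (pos C a <= pos C b)%N.
Proof.
by move=> aA bA; rewrite !pos_comp_restr // find_filter_leq // => c; apply: meets_of_mem.
Qed.

Lemma eq_pos_restr A C a b : a \in A -> b \in A ->
  (pos (comp_restr A C) a == pos (comp_restr A C) b) = (pos C a == pos C b).
Proof.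
by move=> aA bA; rewrite !pos_comp_restr // find_filter_eq // => c; apply: meets_of_mem.
Qed.

Lemma compatible_setU A B T1 T2 C : [disjoint A & B] ->
  T1 \subset setX A A -> T2 \subset setX B B ->
  compatible (T1 :|: T2) C = compatible T1 (comp_restr A C) && compatible T2 (comp_restr B C).
Proof.
move=> dAB T1A T2B.
have notT2 a b : a \in A -> ((b, a) \in T2) = false.
  by move=> aA; apply/negP => /(mem_sub_setX T2B)/andP[_]; rewrite (disjointFr dAB aA).
have notT1 a b : a \in B -> ((b, a) \in T1) = false.
  by move=> aB; apply/negP => /(mem_sub_setX T1A)/andP[_]; rewrite (disjointFl dAB aB).
apply/compatibleP/andP => [H | [/compatibleP H1 /compatibleP H2] a b].
  split; apply/compatibleP => a b ab.
    have /andP[aA bA] := mem_sub_setX T1A ab.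
    move: (H a b); rewrite !in_setU ab (notT2 _ _ aA) orbF.
    by rewrite leq_pos_restr ?eq_pos_restr //; apply.
  have /andP[aB bB] := mem_sub_setX T2B ab.
  move: (H a b); rewrite !in_setU ab (notT1 _ _ aB) orbT.
  by rewrite leq_pos_restr ?eq_pos_restr //; apply.
rewrite in_setU => /orP[ab | ab].
  have /andP[aA bA] := mem_sub_setX T1A ab.
  rewrite in_setU (notT2 _ _ aA) orbF.
  by rewrite -(leq_pos_restr C aA bA) -(eq_pos_restr C aA bA); apply: H1.
have /andP[aB bB] := mem_sub_setX T2B ab.
rewrite in_setU (notT1 _ _ aB).
by rewrite -(leq_pos_restr C aB bB) -(eq_pos_restr C aB bB); apply: H2.
Qed.

Lemma Phi_prod A B T1 T2 C : [disjoint A & B] -> is_top A T1 -> is_top B T2 ->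
  Phi K (A :|: B) (T1 :|: T2) C = cprod A B (Phi K A T1) (Phi K B T2) C.
Proof.
move=> dAB /top_sub T1A /top_sub T2B.
have T12 : T1 :|: T2 \subset setX (A :|: B) (A :|: B).
  by rewrite subUset (subset_trans T1A) ?(subset_trans T2B) // setXS ?subsetUl ?subsetUr.
have countE C1 C2 : C1 \in comps A -> C2 \in comps B ->
    (count_mem C (qsh C1 C2))%:R =
      (is_comp (A :|: B) C)%:R * (C1 == comp_restr A C)%:R * (C2 == comp_restr B C)%:R :> K.
  by rewrite !mem_comps => H1 H2; rewrite (count_qsh C dAB H1 H2) !natr_andb mulrA.
rewrite /cprod PhiE //; case: (boolP (is_comp (A :|: B) C)) => HC /=; last first.
  rewrite big1_seq // => C1 /andP[_ C1A]; rewrite big1_seq // => C2 /andP[_ C2B].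
  by rewrite countE // (negbTE HC) mulr0n !mul0r mulr0.
have rA : comp_restr A C \in comps A by rewrite mem_comps (comp_restr_comp HC (subsetUl A B)).
have rB : comp_restr B C \in comps B by rewrite mem_comps (comp_restr_comp HC (subsetUr A B)).
rewrite (bigD1_seq _ rA) ?undup_uniq //= [X in _ + X]big1_seq ?addr0; last first.
  move=> C1 /andP[C1r C1A]; rewrite big1_seq // => C2 /andP[_ C2B].
  by rewrite countE // (negbTE C1r) mulr0n mulr0 mul0r mulr0.
rewrite (bigD1_seq _ rB) ?undup_uniq //= [X in _ + X]big1_seq ?addr0; last first.
  by move=> C2 /andP[C2r C2B]; rewrite countE // (negbTE C2r) mulr0n !mulr0.
rewrite countE // !eqxx !mulr1 !PhiE //; rewrite !mem_comps in rA rB.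
by rewrite rA rB HC (compatible_setU C dAB T1A T2B) natr_andb mulr1.
Qed.

Lemma Phi_tb_morphism : tb_morphism (@Phi X K).
Proof.
split=> [A T C HT HC | s A T C | | A B T1 T2 C | A B T C1 C2]; first exact: Phi_out.
- exact: Phi_relabel.
- exact: Phi_unit.
- exact: Phi_prod.
- by move=> dAB /Phi_coprod; apply.
Qed.

(** * Uniqueness *)

Lemma top_restr A B T : is_top A T -> B \subset A -> is_top B (restr B T).
Proof.
case/and3P=> _ /forall_inP refl /forallP trans BA; apply/and3P; split.
- exact: subsetIr.
- by apply/forall_inP => a aB; rewrite in_restr aB refl // (subsetP BA).
apply/forallP => a; apply/forallP => b; apply/forallP => c; rewrite !in_restr.
apply/implyP => /andP[/and3P[ab -> _] /and3P[bc _ ->]].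
by rewrite (implyP (forallP (forallP (trans a) b) c)) ?ab.
Qed.

Lemma top_set0 T : is_top set0 T -> T = set0.
Proof.
move/top_sub => T0; apply/eqP; rewrite -subset0; apply: subset_trans T0 _.
by apply/subsetP => -[a b]; rewrite in_setX inE.
Qed.

Lemma tb_morphism_unique (psi1 psi2 : {set X} -> {set X * X} -> seq {set X} -> K) :
  tb_morphism psi1 -> eps'_compat psi1 -> tb_morphism psi2 -> eps'_compat psi2 ->
  forall A T C, is_top A T -> psi1 A T C = psi2 A T C.
Proof.
case=> out1 _ unit1 _ cop1 eps1 [out2 _ unit2 _ cop2] eps2 A T C.
have single A' T' : is_top A' T' -> A' != set0 -> psi1 A' T' [:: A'] = psi2 A' T' [:: A'].
  move=> HT A0; move: (eps1 _ _ HT) (eps2 _ _ HT).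
  by rewrite !eps'_compE /trivial_comp (negbTE A0) => -> ->.
elim: C A T => [|c C IH] A T HT.
  case: (boolP (is_comp A [::])) => [/and3P[_ _] | HC]; last by rewrite out1 ?out2.
  rewrite big_nil => /eqP A0; move: HT; rewrite -A0 => /top_set0 ->.
  by rewrite unit1 unit2.
case: (boolP (is_comp A (c :: C))) => HC; last by rewrite out1 ?out2.
case/comp_cons: HC => c0 dj HU EA; subst A.
have Hc : is_comp c [:: c] by move: (trivial_compP c); rewrite /trivial_comp (negbTE c0).
rewrite -cat1s cop1 // cop2 //; case: ifP => // _.
by rewrite single ?IH //; apply: top_restr HT _; rewrite ?subsetUl ?subsetUr.
Qed.

End TopComp.

Theorem theorem41 (X : finType) (K : fieldType) :
  (tb_morphism (@Phi X K) /\ eps'_compat (@Phi X K)) /\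
  (forall psi : {set X} -> {set X * X} -> seq {set X} -> K,
     tb_morphism psi -> eps'_compat psi ->
     forall (A : {set X}) (T : {set X * X}), is_top A T -> forall C : seq {set X}, psi A T C = Phi K A T C).
Proof.
have Phi_mor := @Phi_tb_morphism X K; have Phi_eps' := @Phi_eps'_compat X K.
split=> [|psi psi_mor psi_eps A T HT C]; first by split.
exact: tb_morphism_unique psi_mor psi_eps Phi_mor Phi_eps' A T C HT.
Qed.
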